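(* Let $q_3\in\{1,2,4\}$, let $p_4>q_4>0$ be coprime with $\gcd(p_4,30)=1$, and let $T=\{(2,1),(3,2),(5,q_3),(p_4,q_4)\}$ satisfy $0<K^2(T)\le 3e_{\mathrm{orb}}(T)$. Write $p_4/(p_4-q_4)=[n_1,\dots,n_\ell]$. Then $\sum_{j=1}^\ell n_j-3\ell\in\{-2,-3\}$ if $q_3=1$, $\in\{-4,-5\}$ if $q_3=2$, and $\in\{-7,-8\}$ if $q_3=4$.
   Context: Hirzebruch–Jung continued fraction: $[a_1,\dots,a_\ell]=a_1-1/(a_2-1/(\cdots-1/a_\ell))$, $a_i\ge 2$. For a type $T=\{(p_i,q_i)\}_{i=1}^4$ write $p_i/(p_i-q_i)=[n_{i,1},\dots,n_{i,\ell_i}]$, $L=\sum\ell_i$, $q_i^{-1}$ the inverse of $q_i$ mod $p_i$ in $(0,p_i)$; $K^2(T)=9-3L+\sum_{i,j}n_{i,j}-\sum_i\frac{q_i+q_i^{-1}-2}{p_i}$ and $e_{\mathrm{orb}}(T)=3-\sum_i(1-1/p_i)$ (so here $3e_{\mathrm{orb}}(T)=\frac1{10}+\frac3{p_4}$). *)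

From mathcomp Require Import all_boot all_order all_algebra.
Set Implicit Arguments. Unset Strict Implicit. Unset Printing Implicit Defensive.
Import Order.TTheory GRing.Theory Num.Theory.

(* Hirzebruch-Jung continued fraction expansion of a/b (a > b > 0):
   a/b = [n_1,...,n_l] = n_1 - 1/(n_2 - 1/(... - 1/n_l)), n_i >= 2.
   n_1 = ceil(a/b); if b | a stop, else continue with b/(n_1 b - a).
   The fuel argument is large enough (a) since the denominators strictly decrease. *)
Fixpoint hj_aux (fuel a b : nat) : seq nat :=
  match fuel with
  | 0 => [::]
  | fuel'.+1 =>
      let n := (a + b - 1) %/ b in
      let r := n * b - a in
      if (b == 0) || (r == 0) then [:: n] else n :: hj_aux fuel' b r
  end.

Definition hj (a b : nat) : seq nat := hj_aux a.+1 a b.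

Definition hjT (pq : nat * nat) : seq nat := hj pq.1 (pq.1 - pq.2).

Definition qinv (p q : nat) : nat :=
  nth 0 [seq k <- iota 1 (p.-1) | q * k %% p == 1 %% p] 0.

Definition Ltot (T : seq (nat * nat)) : nat := \sum_(pq <- T) size (hjT pq).

Definition sumN (T : seq (nat * nat)) : nat := \sum_(pq <- T) \sum_(n <- hjT pq) n.

Local Open Scope ring_scope.

Definition K2 (T : seq (nat * nat)) : rat :=
  9 - 3 * (Ltot T)%:R + (sumN T)%:R
  - \sum_(pq <- T) ((pq.2 + qinv pq.1 pq.2)%:R - 2) / (pq.1)%:R.

Definition eorb (T : seq (nat * nat)) : rat :=
  3 - \sum_(pq <- T) (1 - ((pq.1)%:R)^-1).

From mathcomp Require Import all_boot all_order all_algebra.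
From mathcomp Require Import ring lra zify.
Import Order.TTheory GRing.Theory Num.Theory.
Local Open Scope ring_scope.

(* K^2 is 9 plus, for each point (p, q) of T, the contribution
   [sum n_j - 3 l - (q + q^-1 - 2)/p]; the first three points of T contribute a
   constant c depending only on q3, and 3 e_orb(T) = 1/10 + 3/p4.  Since
   1 <= q4, q4^-1 < p4 and coprimality with 30 forces p4 >= 7, the last
   correction lies in [-1/p4, 2 - 4/p4], so 0 < K^2 <= 3 e_orb traps the
   integer sum n_j - 3 l in the interval (-c - 1/7, 21/10 - c), which
   contains exactly two integers. *)

Lemma qinv_le (p q : nat) : (qinv p q <= p.-1)%N.
Proof.
rewrite /qinv; set s := [seq _ <- _ | _].
have s_le : all (fun k => k <= p.-1)%N s.
  by rewrite all_filter; apply/allP => k; rewrite mem_iota => k_range; apply/implyP; lia.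
have [s_gt0 | s_le0] := ltnP 0 (size s); last by rewrite nth_default.
by move/allP: s_le; apply; apply: mem_nth.
Qed.

Lemma qinv_correction_bounds (p q : nat) : (0 < q < p)%N ->
  - p%:R^-1 <= ((q + qinv p q)%:R - 2 : rat) / p%:R <= 2 - 4 / p%:R.
Proof.
move=> /andP[q_gt0 q_lt_p].
have p_gt0 : 0 < p%:R :> rat by rewrite ltr0n; lia.
have q_ge1 : 1 <= q%:R :> rat by rewrite ler1n.
have qinv_ge0 : 0 <= (qinv p q)%:R :> rat by [].
have q_le : q%:R + 1 <= p%:R :> rat by rewrite natr1 ler_nat.
have qinv_le' : (qinv p q)%:R + 1 <= p%:R :> rat.
  by rewrite natr1 ler_nat; have := qinv_le p q; lia.
have -> : 2 - 4 / p%:R = (2 * p%:R - 4) / p%:R :> rat by field; rewrite gt_eqF.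
have -> : - p%:R^-1 = -1 / p%:R :> rat by rewrite mulN1r.
rewrite !ler_pM2r ?invr_gt0 // natrD; apply/andP; split; lra.
Qed.

Lemma coprime30_ge7 (p : nat) : (1 < p)%N -> coprime p 30 -> (7 <= p)%N.
Proof. by case: p => [|[|[|[|[|[|[|p]]]]]]]. Qed.

Lemma mem_pair_of_window (s m : int) (lo hi : rat) :
  (m - 2)%:~R <= lo -> hi <= (m + 1)%:~R -> lo < s%:~R < hi -> s \in [:: m; m - 1].
Proof.
move=> lo_ge hi_le /andP[s_gt s_lt].
have : m - 2 < s by rewrite -(ltr_int rat); apply: le_lt_trans s_gt.
have : s < m + 1 by rewrite -(ltr_int rat); apply: lt_le_trans hi_le.
by rewrite !inE; lia.
Qed.

Definition hj_shift (pq : nat * nat) : int :=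
  (\sum_(n <- hjT pq) n)%:Z - 3 * (size (hjT pq))%:Z.

Definition hj_defect (pq : nat * nat) : rat :=
  (hj_shift pq)%:~R - ((pq.2 + qinv pq.1 pq.2)%:R - 2) / pq.1%:R.

Lemma K2E (T : seq (nat * nat)) : K2 T = 9 + \sum_(pq <- T) hj_defect pq.
Proof.
have -> : \sum_(pq <- T) hj_defect pq =
    \sum_(pq <- T) (\sum_(n <- hjT pq) n)%:R - 3 * \sum_(pq <- T) (size (hjT pq))%:R
    - \sum_(pq <- T) ((pq.2 + qinv pq.1 pq.2)%:R - 2) / pq.1%:R.
  rewrite mulr_sumr -!sumrB; apply: eq_bigr => pq _.
  by rewrite /hj_defect /hj_shift rmorphB /= rmorphM.
by rewrite /K2 /Ltot /sumN !natr_sum; ring.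
Qed.

Lemma hj_defect_values :
  [/\ hj_defect (2, 1) = -1, hj_defect (3, 2) = -2/3, hj_defect (5, 1) = -4,
      hj_defect (5, 2) = -8/5 & hj_defect (5, 4) = 4/5].
Proof. by rewrite /hj_defect /hj_shift unlock. Qed.

Lemma hj_shift_window (p q : nat) (c : rat) : (0 < q < p)%N -> (7 <= p)%N ->
  0 < c + hj_defect (p, q) <= 1/10 + 3 / p%:R ->
  - c - 1/7 < (hj_shift (p, q))%:~R < 21/10 - c.
Proof.
move=> q_range p_ge7 /andP[defect_gt0 defect_le].
have := qinv_correction_bounds p q q_range.
have inv_p_gt0 : 0 < (p%:R : rat)^-1 by rewrite invr_gt0 ltr0n; lia.
have inv_p_le : (p%:R : rat)^-1 <= 1/7 by rewrite div1r lef_pV2 ?posrE ?ltr0n ?ler_nat //; lia.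
move: defect_gt0 defect_le inv_p_gt0 inv_p_le; rewrite /hj_defect /=.
move: (((q + qinv p q)%:R - 2 : rat) / p%:R) ((p%:R : rat)^-1) => y z.
by move=> ? ? ? ? /andP[? ?]; apply/andP; split; lra.
Qed.

Theorem mainTheorem13 (q3 p4 q4 : nat) :
  q3 \in [:: 1%N; 2%N; 4%N] ->
  (0 < q4)%N -> (q4 < p4)%N -> coprime p4 q4 -> coprime p4 30 ->
  let T := [:: (2%N, 1%N); (3%N, 2%N); (5%N, q3); (p4, q4)] in
  0 < K2 T -> K2 T <= 3 * eorb T ->
  let s : int := (\sum_(n <- hj p4 (p4 - q4)) n)%:Z - 3 * (size (hj p4 (p4 - q4)))%:Z in
  (q3 = 1%N -> s \in [:: -2; -3]) /\
  (q3 = 2%N -> s \in [:: -4; -5]) /\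
  (q3 = 4%N -> s \in [:: -7; -8]).
Proof.
move=> _ q4_gt0 q4_lt_p4 _ p4_coprime30 T K2_gt0 K2_le s.
have q4_range : (0 < q4 < p4)%N by apply/andP.
have p4_ge7 : (7 <= p4)%N by apply: coprime30_ge7 => //; lia.
have [d21 d32 d51 d52 d54] := hj_defect_values.
have eorbT : 3 * eorb T = 1/10 + 3 / p4%:R.
  by rewrite /eorb !big_cons big_nil /=; lra.
have K2T : K2 T = 9 - 1 - 2/3 + hj_defect (5, q3) + hj_defect (p4, q4).
  by rewrite K2E !big_cons big_nil d21 d32; ring.
have window (c : rat) (m : int) : 9 - 1 - 2/3 + hj_defect (5, q3) = c ->
    (m - 2)%:~R <= - c - 1/7 -> 21/10 - c <= (m + 1)%:~R -> s \in [:: m; m - 1].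
  move=> def_c lo_ge hi_le; apply: (mem_pair_of_window _ _ _ _ lo_ge hi_le).
  apply: (hj_shift_window _ _ _ q4_range p4_ge7).
  by rewrite -def_c -K2T -eorbT K2_gt0 K2_le.
split; [|split] => q3E; subst q3.
- by apply: (window (10/3) (-2)); rewrite ?d51; lra.
- by apply: (window (86/15) (-4)); rewrite ?d52; lra.
- by apply: (window (122/15) (-7)); rewrite ?d54; lra.
Qed.
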